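(* For $n\ge1$, the number of equivalence classes of period configurations of Parallel Diffusion on the labelled complete graph $K_n$ (vertex set $\{1,\dots,n\}$) equals $$\sum_{(B_1,\dots,B_N)}\ \prod_{i=2}^{N}\bigl(|B_{i-1}|+|B_i|-1\bigr),$$ where the sum runs over all ordered set partitions $(B_1,\dots,B_N)$ of $\{1,\dots,n\}$ into nonempty blocks (any $N\ge1$), and the empty product (for $N=1$) equals $1$.
   Context: Parallel Diffusion on a graph $G$: a configuration assigns an integer stack size $|v|$ to each vertex. One firing step replaces every stack size simultaneously by $|v| + \#\{u\in N(v): |u|>|v|\} - \#\{u\in N(v): |u|<|v|\}$. A period configuration is a configuration $D$ such that repeated firing starting from $D$ returns to $D$ after some positive number of steps. Two configurations on the same labelled graph are equivalent if one is obtained from the other by adding the same integer to every vertex's stack size. (The ordered partition $(B_1,\dots,B_N)$ records which vertices share each of the $N$ distinct stack sizes, listed in increasing order of stack size.) *)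

From mathcomp Require Import all_boot all_order all_algebra.
Set Implicit Arguments. Unset Strict Implicit. Unset Printing Implicit Defensive.
Import Order.TTheory GRing.Theory Num.Theory.

Definition config (T : finType) := T -> int.

Definition pd_fire (T : finType) (adj : rel T) (D : config T) : config T :=
  fun v => (D v + (#|[set u | adj v u & (D v < D u)%R]|%:Z)
                - (#|[set u | adj v u & (D u < D v)%R]|%:Z))%R.

Definition pd_period (T : finType) (adj : rel T) (D : config T) : Prop :=
  exists k : nat, (0 < k)%N /\ iter k (pd_fire adj) D = D.

Definition config_equiv (T : finType) (D D' : config T) : Prop :=
  exists c : int, forall v, D' v = (D v + c)%R.

Definition complete_adj (n : nat) : rel 'I_n := fun u v => u != v.

Definition ordered_set_partition (n N : nat) (t : N.-tuple {set 'I_n}) : bool :=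
  [&& [forall i : 'I_N, tnth t i != set0],
      [forall i : 'I_N, forall j : 'I_N, (i != j) ==> [disjoint tnth t i & tnth t j]]
    & (\bigcup_(i < N) tnth t i == [set: 'I_n])].

(* prod_{i=2}^N (|B_{i-1}| + |B_i| - 1), blocks indexed from 0 in the tuple. *)
Definition osp_weight (n N : nat) (t : N.-tuple {set 'I_n}) : nat :=
  \prod_(1 <= i < N) (#|nth set0 t i.-1| + #|nth set0 t i| - 1).

(* Sum over all ordered set partitions; the number of blocks N ranges over 1..n
   (a partition of an n-set into nonempty blocks has at most n blocks). *)
Definition osp_sum (n : nat) : nat :=
  \sum_(1 <= N < n.+1) \sum_(t : N.-tuple {set 'I_n} | ordered_set_partition t) osp_weight t.

From mathcomp Require Import all_boot all_order all_algebra.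
From mathcomp Require Import zify ring lra.
From Stdlib Require Import FunctionalExtensionality.
Set Implicit Arguments. Unset Strict Implicit. Unset Printing Implicit Defensive.
Import Order.TTheory GRing.Theory Num.Theory.

(* On K_n a firing adds to each stack its drift, the number of
      higher stacks minus the number of lower ones.  Tracking the second moment
      of the stacks and their total pairwise spread along a period shows that a
      configuration is periodic iff one firing strictly reverses the order of
      the stacks; such a configuration then has period 2.
   2. Locality.  Reversal only has to be checked between consecutive stack
      sizes a < b: it holds iff b - a is smaller than the total number of
      vertices at heights a and b.  It is invariant under translation.
   3. Coding.  A reversing configuration with minimum 0 is determined by its
      levels, an ordered set partition (B_1, ..., B_N), and by the gaps between
      consecutive levels, 1 <= g_i < |B_{i-1}| + |B_i|; conversely every such
      code decodes to a reversing configuration with minimum 0.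
   4. Counting.  Codes are counted by osp_sum n; enumerating them and decoding
      yields one representative in each equivalence class of periodic
      configurations. *)

Local Open Scope ring_scope.

Lemma card_set_sumz (T : finType) (P : pred T) :
  #|[set u | P u]|%:Z = \sum_u (P u)%:R :> int.
Proof.
rewrite (eq_bigr (fun u => if P u then 1 else 0)); last by move=> u _; case: (P u).
rewrite -big_mkcond sumr_const /= natz; congr (Posz _).
by apply: eq_card => u; rewrite inE.
Qed.

Section Firing.
Variable n : nat.
Implicit Types x y : config 'I_n.

Definition drift x v : int := #|[set u | x v < x u]|%:Z - #|[set u | x u < x v]|%:Z.

Definition fire x : config 'I_n := pd_fire (@complete_adj n) x.

Lemma fireE x v : fire x v = x v + drift x v.
Proof.
have drop_self (P : int -> int -> bool) : (forall a, P a a = false) ->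
    [set u | v != u & P (x v) (x u)] = [set u | P (x v) (x u)].
  by move=> Pirr; apply/setP => u; rewrite !inE; case: eqVneq => [->|//]; rewrite Pirr.
rewrite /fire /pd_fire /drift /complete_adj /=.
rewrite (drop_self (fun a b => a < b)) ?(drop_self (fun a b => b < a)) => [|a|a];
  by rewrite ?ltxx // addrA.
Qed.

Lemma drift_sg x v : drift x v = \sum_u Num.sg (x u - x v).
Proof.
rewrite /drift !card_set_sumz -sumrB; apply: eq_bigr => u _.
case: (ltrgtP (x u) (x v)) => h.
- by rewrite ltr0_sg ?subr_lt0 // ltNge (ltW h) /= sub0r.
- by rewrite gtr0_sg ?subr_gt0 // ltNge (ltW h) /= subr0.
- by rewrite h !subrr sgr0.
Qed.

Lemma drift_pairing x y :
  2 * \sum_v drift x v * y v = \sum_v \sum_u Num.sg (x u - x v) * (y v - y u).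
Proof.
have E : \sum_v drift x v * y v = \sum_v \sum_u Num.sg (x u - x v) * y v.
  by apply: eq_bigr => v _; rewrite drift_sg mulr_suml.
have E' : \sum_v drift x v * y v = \sum_v \sum_u - (Num.sg (x u - x v) * y u).
  rewrite E exchange_big /=; apply: eq_bigr => v _; apply: eq_bigr => u _.
  by rewrite -opprB sgrN mulNr.
rewrite mulr2n mulrDl mul1r {1}E E' -big_split /=; apply: eq_bigr => v _.
by rewrite -big_split /=; apply: eq_bigr => u _; rewrite mulrBr.
Qed.

Definition moment x : int := \sum_v x v ^+ 2.
Definition spread x : int := \sum_v \sum_u `|x v - x u|.
Definition drift_norm x : int := \sum_v drift x v ^+ 2.

Definition defect x y v u : int :=
  `|y v - y u| - Num.sg (x u - x v) * (y v - y u).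

Lemma defect_ge0 x y v u : 0 <= defect x y v u.
Proof.
rewrite subr_ge0; case: (ltrgtP (x u) (x v)) => h.
- by rewrite ltr0_sg ?subr_lt0 // mulN1r -normrN ler_norm.
- by rewrite gtr0_sg ?subr_gt0 // mul1r ler_norm.
- by rewrite h subrr sgr0 mul0r.
Qed.

Lemma spread_drift x y :
  spread y - 2 * \sum_v drift x v * y v = \sum_v \sum_u defect x y v u.
Proof.
by rewrite drift_pairing /spread -sumrB; apply: eq_bigr => v _; rewrite -sumrB.
Qed.

Lemma drift_self x : 2 * \sum_v drift x v * x v = - spread x.
Proof.
rewrite drift_pairing /spread -sumrN; apply: eq_bigr => v _; rewrite -sumrN.
apply: eq_bigr => u _; case: (ltrgtP (x u) (x v)) => h.
- by rewrite ltr0_sg ?subr_lt0 // mulN1r.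
- by rewrite gtr0_sg ?subr_gt0 // mul1r opprB.
- by rewrite h subrr sgr0 mul0r oppr0.
Qed.

Lemma drift_fire x : \sum_v drift x v * fire x v = \sum_v drift x v * x v + drift_norm x.
Proof. by rewrite /drift_norm -big_split /=; apply: eq_bigr => v _; rewrite fireE; ring. Qed.

Lemma moment_fire x : moment (fire x) = moment x - spread x + drift_norm x.
Proof.
rewrite /moment /drift_norm -drift_self mulr_sumr -!big_split /=.
by apply: eq_bigr => v _; rewrite fireE; ring.
Qed.

Lemma spread_fire x : 2 * drift_norm x <= spread x + spread (fire x).
Proof.
have := spread_drift x (fire x); rewrite drift_fire mulrDr.
have : 0 <= \sum_v \sum_u defect x (fire x) v u.
  by apply: sumr_ge0 => v _; apply: sumr_ge0 => u _; exact: defect_ge0.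
have := drift_self x; lra.
Qed.

Lemma balanced_fire_antitone x :
  spread x + spread (fire x) = 2 * drift_norm x ->
  forall u v, x v < x u -> fire x u <= fire x v.
Proof.
move=> bal u v lt_vu.
have defect0 : \sum_w \sum_u' defect x (fire x) w u' = 0.
  rewrite -spread_drift drift_fire mulrDr; have := drift_self x; lra.
have row0 w : \sum_u' defect x (fire x) w u' = 0.
  apply: (psumr_eq0P _ defect0) => // w' _.
  by apply: sumr_ge0 => u' _; exact: defect_ge0.
have := psumr_eq0P (fun u' _ => defect_ge0 x (fire x) v u') (row0 v) (i := u) isT.
rewrite /defect gtr0_sg ?subr_gt0 // mul1r => /eqP; rewrite subr_eq0 => /eqP eq_abs.
by rewrite -subr_ge0 -eq_abs.
Qed.

Lemma fire_level x u v : x u = x v -> fire x u = fire x v.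
Proof. by move=> eq_uv; rewrite !fireE /drift eq_uv. Qed.

Lemma iter_fire_level k x u v : x u = x v -> iter k fire x u = iter k fire x v.
Proof. by elim: k => //= k IH eq_uv; apply: fire_level; apply: IH. Qed.

(* Along a period, the second moment and the spread return to their initial
   values; as the balance defects of [spread_fire] are nonnegative, they all
   vanish, in particular at the first step. *)
Lemma period_balance D : pd_period (@complete_adj n) D ->
  spread D + spread (fire D) = 2 * drift_norm D.
Proof.
case=> k [k_gt0 Dk].
pose X t := iter t fire D.
have Xk : X k = D by [].
pose b t := spread (X t) + spread (fire (X t)) - 2 * drift_norm (X t).
have b_ge0 t : 0 <= b t by rewrite subr_ge0 spread_fire.
have telescope (F : config 'I_n -> int) :
    \sum_(0 <= t < k) (F (X t.+1) - F (X t)) = 0.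
  by rewrite telescope_sumr // Xk subrr.
have sum_b : \sum_(0 <= t < k) b t = 0.
  have -> : \sum_(0 <= t < k) b t =
      \sum_(0 <= t < k) (spread (X t.+1) - spread (X t)) -
      2 * \sum_(0 <= t < k) (moment (X t.+1) - moment (X t)).
    rewrite mulr_sumr -sumrB; apply: eq_bigr => t _.
    by rewrite /b [X t.+1]/= moment_fire; ring.
  by rewrite !telescope mulr0 subr0.
move: sum_b; rewrite big_mkord => sum_b.
have := psumr_eq0P (P := predT) (fun t _ => b_ge0 (nat_of_ord t)) sum_b.
by move=> /(_ (Ordinal k_gt0) isT); rewrite /b /=; lra.
Qed.

Definition reverses x := forall u v, x u < x v -> fire x v < fire x u.

(* Periodic configurations reverse: the balance gives weak reversal, and a tie
   after one firing would persist along the period. *)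
Lemma period_reverses D : pd_period (@complete_adj n) D -> reverses D.
Proof.
move=> perD u v lt_uv.
have := balanced_fire_antitone (period_balance perD) lt_uv.
rewrite le_eqVlt => /orP [/eqP same|//].
case: perD => k [k_gt0 Dk].
have Dk' : iter k fire D = D by [].
have := iter_fire_level k.-1 same; rewrite -!iterSr prednK // Dk' => eq_vu.
by move: lt_uv; rewrite eq_vu ltxx.
Qed.

Lemma reverses_period D : reverses D -> pd_period (@complete_adj n) D.
Proof.
move=> rev; exists 2%N; split => //; apply: functional_extensionality => v.
have above : [set u | fire D v < fire D u] = [set u | D u < D v].
  apply/setP => u; rewrite !inE; case: (ltrgtP (D u) (D v)) => h.
  - by rewrite rev.
  - by rewrite ltNge (ltW (rev _ _ h)).
  - by rewrite (fire_level h) ltxx.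
have below : [set u | fire D u < fire D v] = [set u | D v < D u].
  apply/setP => u; rewrite !inE; case: (ltrgtP (D u) (D v)) => h.
  - by rewrite ltNge (ltW (rev _ _ h)).
  - by rewrite rev.
  - by rewrite (fire_level h) ltxx.
rewrite [iter 2 _ D]/= -/(fire (fire D)) fireE /drift above below fireE /drift; ring.
Qed.

End Firing.

Lemma card_set_split (T : finType) (P Q : pred T) :
  #|[set w | P w]| = (#|[set w | P w && Q w]| + #|[set w | P w && ~~ Q w]|)%N.
Proof.
rewrite -(cardsID [set w | Q w] [set w | P w]).
by congr addn; apply: eq_card => w; rewrite !inE // andbC.
Qed.

Section LocalReversal.
Variable n : nat.
Implicit Types x : config 'I_n.

Definition between x u v : nat :=
  addn #|[set w | (x u < x w) && (x w <= x v)]| #|[set w | (x u <= x w) && (x w < x v)]|.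

Lemma fire_gap x u v : x u < x v ->
  fire x u - fire x v = x u - x v + (between x u v)%:Z.
Proof.
move=> lt_uv; rewrite !fireE /drift /between.
rewrite (card_set_split (fun w => x u < x w) (fun w => x w <= x v)).
rewrite (card_set_split (fun w => x w < x v) (fun w => x u <= x w)).
have -> : [set w | (x u < x w) && ~~ (x w <= x v)] = [set w | x v < x w].
  by apply/setP => w; rewrite !inE -ltNge andb_idl // => /(lt_trans lt_uv).
have -> : [set w | (x w < x v) && ~~ (x u <= x w)] = [set w | x w < x u].
  by apply/setP => w; rewrite !inE -ltNge andb_idl // => /lt_trans; apply.
have -> : [set w | (x w < x v) && (x u <= x w)] = [set w | (x u <= x w) && (x w < x v)].
  by apply/setP => w; rewrite !inE andbC.
rewrite !PoszD; ring.
Qed.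

Lemma reversesP x :
  reverses x <-> (forall u v, x u < x v -> x v - x u < (between x u v)%:Z).
Proof. by split=> rev u v lt_uv; have := rev u v lt_uv; have := fire_gap lt_uv; lra. Qed.

Lemma between_split x u v w : x u < x w -> x w < x v ->
  between x u v = (between x u w + between x w v)%N.
Proof.
move=> lt_uw lt_wv; rewrite /between.
rewrite (card_set_split (fun y => (x u < x y) && (x y <= x v)) (fun y => x y <= x w)).
rewrite (card_set_split (fun y => (x u <= x y) && (x y < x v)) (fun y => x y < x w)).
rewrite addnACA; congr (_ + _ + (_ + _))%N; apply: eq_card => y; rewrite !inE.
- rewrite -andbA; congr andb; apply: andb_idl => le_yw.
  exact: le_trans le_yw (ltW lt_wv).
- rewrite -andbA; congr andb; apply: andb_idl => lt_yw; exact: lt_trans lt_yw lt_wv.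
- rewrite -ltNge andbC andbA; congr andb; apply: andb_idr; exact: lt_trans.
- rewrite -leNgt andbC andbA; congr andb; apply: andb_idr => le_wy.
  exact: ltW (lt_le_trans lt_uw le_wy).
Qed.

Lemma between_consecutive x u v : x u < x v -> (forall w, ~~ ((x u < x w) && (x w < x v))) ->
  between x u v = (#|[set w | x w == x u]| + #|[set w | x w == x v]|)%N.
Proof.
move=> lt_uv gap; rewrite /between addnC.
congr addn; apply: eq_card => w; rewrite !inE.
- apply/andP/eqP => [[le_uw lt_wv]|->]; last by rewrite lexx lt_uv.
  apply/eqP; rewrite eq_le le_uw andbT leNgt.
  by apply: contra (gap w) => lt_uw; rewrite lt_uw lt_wv.
- apply/andP/eqP => [[lt_uw le_wv]|->]; last by rewrite lt_uv lexx.
  apply/eqP; rewrite eq_le le_wv /= leNgt.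
  by apply: contra (gap w) => lt_wv; rewrite lt_uw lt_wv.
Qed.

Lemma reverses_locally x : reverses x <->
  (forall u v, x u < x v -> (forall w, ~~ ((x u < x w) && (x w < x v))) ->
     x v - x u < (#|[set w | x w == x u]| + #|[set w | x w == x v]|)%N%:Z).
Proof.
split=> [/reversesP rev u v lt_uv gap|local]; first by rewrite -between_consecutive ?rev.
apply/reversesP.
suff bounded m u v : x v - x u <= m%:Z -> x u < x v -> x v - x u < (between x u v)%:Z.
  by move=> u v; apply: (bounded `|x v - x u|%N); rewrite abszE ler_norm.
elim: m u v => [|m IH] u v le_m lt_uv; first lia.
case: (pickP (fun w => (x u < x w) && (x w < x v))) => [w /andP [lt_uw lt_wv]|gap].
  rewrite (between_split lt_uw lt_wv) PoszD.
  have := IH u w; have := IH w v; lia.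
by rewrite between_consecutive ?local // => w; rewrite gap.
Qed.

Lemma reverses_shift x (c : int) : reverses x -> reverses (fun w => x w + c).
Proof.
have between_shift u v : between (fun w => x w + c) u v = between x u v.
  by rewrite /between; congr addn; apply: eq_card => w; rewrite !inE !lerD2r !ltrD2r.
move=> /reversesP rev; apply/reversesP => u v; rewrite between_shift ltrD2r => lt_uv.
by have := rev u v lt_uv; lra.
Qed.

End LocalReversal.

Local Close Scope ring_scope.

Section Heights.
Variables (T : finType) (f : T -> nat).

Definition heights : seq nat := sort leq (undup [seq f v | v <- enum T]).

Lemma heights_sorted : sorted ltn heights.
Proof.
rewrite ltn_sorted_uniq_leq sort_uniq undup_uniq /=.
apply: sort_sorted; exact: leq_total.
Qed.

Lemma heights_uniq : uniq heights.
Proof. by rewrite sort_uniq undup_uniq. Qed.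

Lemma mem_heights a : (a \in heights) = [exists v, f v == a].
Proof.
rewrite mem_sort mem_undup; apply/mapP/existsP => [[v _ ->]|[v /eqP <-]].
  by exists v.
by exists v; rewrite ?mem_enum.
Qed.

Lemma heights_mem v : f v \in heights.
Proof. by rewrite mem_heights; apply/existsP; exists v. Qed.

Lemma size_heights : size heights <= #|T|.
Proof.
rewrite size_sort; apply: leq_trans (size_undup _) _.
by rewrite size_map -cardE.
Qed.

Lemma nth_heights_attained i : i < size heights -> exists v, f v = nth 0 heights i.
Proof.
move=> lt_i; have := mem_nth 0 lt_i; rewrite mem_heights => /existsP [v /eqP fv].
by exists v.
Qed.

Lemma heights_lt i j : i < j -> j < size heights -> nth 0 heights i < nth 0 heights j.
Proof.
move=> lt_ij lt_j; apply: (sorted_ltn_nth ltn_trans 0 heights_sorted) => //.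
by rewrite inE (ltn_trans lt_ij).
Qed.

Lemma heights_index v :
  nth 0 heights (index (f v) heights) = f v /\ index (f v) heights < size heights.
Proof. by rewrite nth_index ?index_mem heights_mem. Qed.

Lemma heights_lt_index i j : i < size heights -> j < size heights ->
  nth 0 heights i < nth 0 heights j -> i < j.
Proof.
move=> lt_i lt_j lt_nth; rewrite ltnNge; apply/negP; rewrite leq_eqVlt.
case/orP => [/eqP eq_ji|lt_ji]; first by move: lt_nth; rewrite eq_ji ltnn.
by have := heights_lt lt_ji lt_i; rewrite ltnNge (ltnW lt_nth).
Qed.

Lemma heights_consecutive i w : i.+1 < size heights ->
  ~~ (nth 0 heights i < f w < nth 0 heights i.+1).
Proof.
move=> lt_i1; apply/negP => /andP [lt_iw lt_wi1].
have [fw lt_w] := heights_index w; rewrite -fw in lt_iw lt_wi1.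
have := heights_lt_index (ltnW lt_i1) lt_w lt_iw.
have := heights_lt_index lt_w lt_i1 lt_wi1; lia.
Qed.

Lemma heights_head : 0 \in heights -> nth 0 heights 0 = 0.
Proof.
move=> h0; have lt_k : index 0 heights < size heights by rewrite index_mem.
case: (posnP (index 0 heights)) => [k0|k_gt0]; first by rewrite -[in RHS](nth_index 0 h0) k0.
by have := heights_lt k_gt0 lt_k; rewrite nth_index.
Qed.

End Heights.

Lemma card_disjoint_le n (A B : {set 'I_n}) : [disjoint A & B] -> #|A| + #|B| <= n.
Proof.
move=> AB; have := cardsUI A B; rewrite (disjoint_setI0 AB) cards0 addn0 => <-.
by apply: leq_trans (max_card _) _; rewrite card_ord.
Qed.

Section OrderedPartition.
Variables (n N : nat) (t : N.-tuple {set 'I_n}).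
Hypothesis t_osp : ordered_set_partition t.

Definition block_of (v : 'I_n) : nat := find (fun B : {set 'I_n} => v \in B) t.

Lemma osp_nonempty i : i < N -> nth set0 t i != set0.
Proof.
move=> lt_i; move: t_osp => /and3P [/forallP ne _ _].
by have := ne (Ordinal lt_i); rewrite (tnth_nth set0).
Qed.

Lemma osp_disjoint i j : i < N -> j < N -> i != j ->
  [disjoint nth set0 t i & nth set0 t j].
Proof.
move=> lt_i lt_j neq_ij; move: t_osp => /and3P [_ /forallP disj _].
move: (disj (Ordinal lt_i)) => /forallP /(_ (Ordinal lt_j)) /implyP.
by rewrite !(tnth_nth set0); apply.
Qed.

Lemma osp_cover v : exists2 i, i < N & v \in nth set0 t i.
Proof.
move: t_osp => /and3P [_ _ /eqP cover].
have : v \in \bigcup_(i < N) tnth t i by rewrite cover inE.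
by case/bigcupP => i _ v_i; exists i => //; rewrite -(tnth_nth set0).
Qed.

Lemma block_of_lt v : block_of v < N.
Proof.
have [i lt_i v_i] := osp_cover v.
rewrite -[X in _ < X](size_tuple t) /block_of -has_find.
by apply/hasP; exists (nth set0 t i) => //; rewrite mem_nth ?size_tuple.
Qed.

Lemma mem_block_of v : v \in nth set0 t (block_of v).
Proof.
apply: (nth_find set0 (a := fun B : {set 'I_n} => v \in B)).
by rewrite has_find size_tuple block_of_lt.
Qed.

Lemma block_ofE i v : i < N -> v \in nth set0 t i -> block_of v = i.
Proof.
move=> lt_i v_i; apply/eqP; apply: contraT => neq_i.
by rewrite (disjointFr (osp_disjoint (block_of_lt v) lt_i neq_i) (mem_block_of v)) in v_i.
Qed.

Lemma block_of_set i : i < N -> [set v | block_of v == i] = nth set0 t i.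
Proof.
move=> lt_i; apply/setP => v; rewrite inE.
by apply/eqP/idP => [<-|]; [exact: mem_block_of | exact: block_ofE].
Qed.

Lemma block_of_onto i : i < N -> exists v, block_of v = i.
Proof. by move=> lt_i; have /set0Pn [v v_i] := osp_nonempty lt_i; exists v; exact: block_ofE. Qed.

Lemma osp_pair_le i : 0 < i < N -> #|nth set0 t i.-1| + #|nth set0 t i| <= n.
Proof.
case/andP=> i_gt0 lt_i; apply: card_disjoint_le; apply: osp_disjoint => //.
  exact: leq_ltn_trans (leq_pred i) lt_i.
by rewrite neq_ltn prednK ?leqnn.
Qed.

End OrderedPartition.

Definition nat_config (T : finType) (f : T -> nat) : config T := fun v => Posz (f v).

Definition pair_size (n N : nat) (t : N.-tuple {set 'I_n}) (i : nat) : nat :=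
  #|nth set0 t i.-1| + #|nth set0 t i|.

Definition gap_range (n N : nat) (t : N.-tuple {set 'I_n}) (i : 'I_N) : pred 'I_n.+1 :=
  fun k => if nat_of_ord i == 0 then nat_of_ord k == 0 else 0 < k < pair_size t i.

Definition gap (n N : nat) (g : {ffun 'I_N -> 'I_n.+1}) (i : nat) : nat :=
  if insub i is Some k then nat_of_ord (g k) else 0.

Definition height (n N : nat) (g : {ffun 'I_N -> 'I_n.+1}) (j : nat) : nat :=
  \sum_(1 <= i < j.+1) gap g i.

Lemma gapE n N (g : {ffun 'I_N -> 'I_n.+1}) (k : 'I_N) : gap g k = g k.
Proof. by rewrite /gap valK. Qed.

Lemma height0 n N (g : {ffun 'I_N -> 'I_n.+1}) : height g 0 = 0.
Proof. by rewrite /height big_geq. Qed.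

Lemma heightS n N (g : {ffun 'I_N -> 'I_n.+1}) j : height g j.+1 = height g j + gap g j.+1.
Proof. by rewrite /height big_nat_recr. Qed.

Section Decoding.
Variables (n N : nat) (t : N.-tuple {set 'I_n}) (g : {ffun 'I_N -> 'I_n.+1}).
Hypothesis t_osp : ordered_set_partition t.
Hypothesis g_valid : g \in family (gap_range t).

Definition decode_stacks (v : 'I_n) : nat := height g (block_of t v).

Lemma gap_bounds i : 0 < i < N -> 0 < gap g i < pair_size t i.
Proof.
case/andP=> i_gt0 lt_i; move: g_valid => /familyP /(_ (Ordinal lt_i)).
have -> : gap g i = g (Ordinal lt_i) by rewrite -gapE.
by rewrite unfold_in /gap_range /= eqn0Ngt i_gt0.
Qed.

Lemma height_ltE i j : i < N -> j < N -> (height g i < height g j) = (i < j).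
Proof.
have height_lt k l : k < l -> l < N -> height g k < height g l.
  elim: l => // l IH lt_kl lt_l; rewrite heightS.
  have /andP [gap_gt0 _] := gap_bounds (i := l.+1) lt_l.
  move: lt_kl; rewrite ltnS leq_eqVlt => /orP [/eqP ->|lt_kl]; first lia.
  have := IH lt_kl (ltnW lt_l); lia.
move=> lt_i lt_j; case: (ltngtP i j) => [lt_ij|lt_ji|->]; first exact: height_lt.
  by apply/negbTE; rewrite -leqNgt ltnW ?height_lt.
exact: ltnn.
Qed.

Lemma height_inj i j : i < N -> j < N -> height g i = height g j -> i = j.
Proof.
move=> lt_i lt_j eq_ij; case: (ltngtP i j) => // [lt_ij|lt_ji].
  by have := height_ltE lt_i lt_j; rewrite eq_ij ltnn lt_ij.
by have := height_ltE lt_j lt_i; rewrite eq_ij ltnn lt_ji.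
Qed.

Lemma decode_ltE u v : (decode_stacks u < decode_stacks v) = (block_of t u < block_of t v).
Proof. exact: height_ltE (block_of_lt t_osp u) (block_of_lt t_osp v). Qed.

Lemma decode_level u : [set w | decode_stacks w == decode_stacks u] = nth set0 t (block_of t u).
Proof.
rewrite -(block_of_set t_osp (block_of_lt t_osp u)); apply/setP => w; rewrite !inE.
apply/eqP/eqP => [|same]; last by rewrite /decode_stacks same.
by apply: height_inj; exact: block_of_lt.
Qed.

(* The decoded configuration reverses: consecutive stacks come from
   consecutive blocks, and their gap is admissible. *)
Lemma decode_reverses : reverses (nat_config decode_stacks).
Proof.
apply/reverses_locally => u v; rewrite /nat_config ltz_nat decode_ltE => lt_uv gap_uv.
have block_v : block_of t v = (block_of t u).+1.
  apply/eqP; rewrite eqn_leq lt_uv andbT leqNgt; apply/negP => lt_i.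
  have [w block_w] := block_of_onto t_osp (ltn_trans lt_i (block_of_lt t_osp v)).
  by have := gap_uv w; rewrite /nat_config !ltz_nat !decode_ltE block_w ltnSn lt_i.
have levelE w : [set w' | Posz (decode_stacks w') == Posz (decode_stacks w)] =
    nth set0 t (block_of t w).
  by rewrite -decode_level; apply/setP => w'; rewrite !inE eqz_nat.
rewrite !levelE subzn; last by apply: ltnW; rewrite decode_ltE.
rewrite ltz_nat /decode_stacks block_v heightS addKn.
have /andP [_] : 0 < gap g (block_of t u).+1 < pair_size t (block_of t u).+1.
  by apply: gap_bounds; rewrite ltn0Sn -block_v block_of_lt.
by rewrite /pair_size.
Qed.

Lemma decode_zero : 0 < n -> exists u, decode_stacks u = 0.
Proof.
move=> n_gt0; have N_gt0 := leq_ltn_trans (leq0n _) (block_of_lt t_osp (Ordinal n_gt0)).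
by have [u block_u] := block_of_onto t_osp N_gt0; exists u; rewrite /decode_stacks block_u height0.
Qed.
End Decoding.

Section Encoding.
Variables (n : nat) (f : 'I_n -> nat).
Local Notation H := (heights f).

Definition level_tuple (N : nat) : N.-tuple {set 'I_n} :=
  @Tuple N _ (mkseq (fun i => [set v | f v == nth 0 H i]) N) (introT eqP (size_mkseq _ _)).

Definition gap_tuple (N : nat) : {ffun 'I_N -> 'I_n.+1} :=
  [ffun i : 'I_N => inord (nth 0 H i - nth 0 H i.-1)].

Lemma nth_level_tuple N i : i < N -> nth set0 (level_tuple N) i = [set v | f v == nth 0 H i].
Proof. by move=> lt_i; rewrite /level_tuple /= nth_mkseq. Qed.

Lemma level_tuple_osp : ordered_set_partition (level_tuple (size H)).
Proof.
apply/and3P; split.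
- apply/forallP => i; rewrite (tnth_nth set0) nth_level_tuple //.
  by have [v fv] := nth_heights_attained (ltn_ord i); apply/set0Pn; exists v; rewrite inE fv.
- apply/forallP => i; apply/forallP => j; apply/implyP => neq_ij.
  rewrite !(tnth_nth set0) !nth_level_tuple // -setI_eq0; apply/eqP/setP => v.
  rewrite !inE; apply/negP => /andP [/eqP -> /eqP same]; move: neq_ij.
  by rewrite -(inj_eq val_inj) /= -(nth_uniq 0 (ltn_ord i) (ltn_ord j) (heights_uniq f)) same eqxx.
- apply/eqP/setP => v; rewrite inE; apply/bigcupP.
  have [fv lt_v] := heights_index f v.
  by exists (Ordinal lt_v); rewrite // (tnth_nth set0) nth_level_tuple //= inE fv.
Qed.

Lemma block_of_level_tuple v : block_of (level_tuple (size H)) v = index (f v) H.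
Proof.
have [fv lt_v] := heights_index f v.
by apply: (block_ofE level_tuple_osp lt_v); rewrite nth_level_tuple // inE fv.
Qed.

Hypothesis f_rev : reverses (nat_config f).

Lemma heights_gap i : 0 < i < size H ->
  nth 0 H i - nth 0 H i.-1 < #|[set v | f v == nth 0 H i.-1]| + #|[set v | f v == nth 0 H i]|.
Proof.
case/andP=> i_gt0 lt_i; have lt_i1 : i.-1 < size H by rewrite (leq_ltn_trans (leq_pred i)).
have [u fu] := nth_heights_attained lt_i1; have [v fv] := nth_heights_attained lt_i.
have lt_uv : (nat_config f u < nat_config f v)%R.
  by rewrite ltz_nat fu fv heights_lt // prednK.
have gap w : ~~ ((nat_config f u < nat_config f w) && (nat_config f w < nat_config f v))%R.
  rewrite /nat_config !ltz_nat fu fv.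
  by have := @heights_consecutive _ f i.-1 w; rewrite prednK //; apply.
have levelE a : [set w | Posz (f w) == Posz a] = [set w | f w == a].
  by apply/setP => w; rewrite !inE eqz_nat.
have [local _] := reverses_locally (nat_config f).
have := local f_rev u v lt_uv gap; rewrite /nat_config !levelE fu fv.
by rewrite subzn ?ltz_nat // -fu -fv -lez_nat (ltW lt_uv).
Qed.

Lemma heights_gap_pair i : 0 < i < size H ->
  0 < nth 0 H i - nth 0 H i.-1 < pair_size (level_tuple (size H)) i.
Proof.
move=> /[dup] /andP [i_gt0 lt_i] i_range.
have lt_i1 : i.-1 < size H by rewrite (leq_ltn_trans (leq_pred i)).
rewrite subn_gt0 heights_lt ?prednK ?ltn_predL //=.
by rewrite /pair_size !nth_level_tuple // heights_gap.
Qed.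

Lemma gap_tupleE (i : 'I_(size H)) :
  nat_of_ord (gap_tuple (size H) i) = nth 0 H i - nth 0 H i.-1.
Proof.
rewrite /gap_tuple ffunE inordK //; case: (posnP i) => [-> | i_gt0]; first by rewrite subnn.
have i_range : 0 < i < size H by rewrite i_gt0 ltn_ord.
have := osp_pair_le level_tuple_osp i_range; have := heights_gap_pair i_range.
by rewrite /pair_size; lia.
Qed.

Lemma gap_tuple_valid : gap_tuple (size H) \in family (gap_range (level_tuple (size H))).
Proof.
apply/familyP => i; rewrite unfold_in /gap_range gap_tupleE.
case: (posnP i) => [-> | i_gt0]; first by rewrite subnn.
by apply: heights_gap_pair; rewrite i_gt0 ltn_ord.
Qed.

Hypothesis f_zero : 0 \in H.

Lemma height_gap_tuple i : i < size H -> height (gap_tuple (size H)) i = nth 0 H i.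
Proof.
elim: i => [_|i IH lt_i1]; first by rewrite height0 heights_head.
rewrite heightS IH ?(ltnW lt_i1) // (gapE _ (Ordinal lt_i1)) gap_tupleE /=.
by rewrite subnKC // ltnW // heights_lt.
Qed.

Lemma decode_encode v : decode_stacks (level_tuple (size H)) (gap_tuple (size H)) v = f v.
Proof.
have [fv lt_v] := heights_index f v.
by rewrite /decode_stacks block_of_level_tuple height_gap_tuple.
Qed.

End Encoding.

Section DecodeEncode.
Variables (n N : nat) (t : N.-tuple {set 'I_n}) (g : {ffun 'I_N -> 'I_n.+1}).
Hypothesis t_osp : ordered_set_partition t.
Hypothesis g_valid : g \in family (gap_range t).
Local Notation d := (decode_stacks t g).

Lemma heights_decode : heights d = [seq height g i | i <- iota 0 N].
Proof.
apply: (irr_sorted_eq ltn_trans ltnn (heights_sorted d)).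
  rewrite (homo_sorted_in (P := [pred i | i < N]) (e := ltn)) ?iota_ltn_sorted //.
    by move=> i j lt_i; rewrite inE => lt_j; rewrite (height_ltE t_osp g_valid).
  by apply/allP => i; rewrite mem_iota.
move=> a; rewrite mem_heights; apply/existsP/mapP => [[v /eqP <-]|[i]].
  by exists (block_of t v); rewrite // mem_iota /= block_of_lt.
rewrite mem_iota /= => lt_i ->; have [v block_v] := block_of_onto t_osp lt_i.
by exists v; rewrite /decode_stacks block_v.
Qed.

Lemma size_heights_decode : size (heights d) = N.
Proof. by rewrite heights_decode size_map size_iota. Qed.

Lemma nth_heights_decode i : i < N -> nth 0 (heights d) i = height g i.
Proof. by move=> lt_i; rewrite heights_decode (nth_map 0) ?size_iota // nth_iota. Qed.

Lemma level_tuple_decode : level_tuple d N = t.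
Proof.
apply: val_inj; apply: (eq_from_nth (x0 := set0)); first by rewrite !size_tuple.
rewrite size_tuple => i lt_i; rewrite nth_level_tuple // nth_heights_decode //.
rewrite -(block_of_set t_osp lt_i); apply/setP => v; rewrite !inE.
apply/eqP/eqP => [|<-//]; apply: (height_inj t_osp g_valid) => //; exact: block_of_lt.
Qed.

Lemma gap_tuple_decode : gap_tuple d N = g.
Proof.
apply/ffunP => i; apply: val_inj; rewrite /gap_tuple ffunE /=.
rewrite !nth_heights_decode ?(leq_ltn_trans (leq_pred i)) //.
move: g_valid => /familyP /(_ i); rewrite unfold_in /gap_range.
case: (posnP i) => [i0 /eqP gi|i_gt0 _].
  by rewrite i0 subnn inordK // gi.
by rewrite -[in height g i](prednK i_gt0) heightS prednK // gapE addKn inordK.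
Qed.

End DecodeEncode.

Lemma card_open_range M b : b <= M -> #|[pred k : 'I_M | 0 < k < b]| = b.-1.
Proof.
move=> le_bM; rewrite -sum1_card.
rewrite (eq_bigl (fun k : 'I_M => (k < b) && (1 <= k))); last by move=> k; rewrite inE andbC.
rewrite -(big_geq_mkord 1 M (fun k => k < b) (fun _ => 1)).
rewrite (eq_bigl (fun i => true && (i < b))) // -(big_nat_widen 1 b M predT (fun _ => 1)) //.
by rewrite sum_nat_const_nat muln1 subn1.
Qed.

Lemma card_gap_family n N (t : N.-tuple {set 'I_n}) : ordered_set_partition t ->
  #|family (gap_range t)| = osp_weight t.
Proof.
move=> t_osp; rewrite card_family foldrE big_map big_enum /=.
have card_range i : #|gap_range t i| = if nat_of_ord i == 0 then 1 else (pair_size t i).-1.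
  rewrite /gap_range; case: eqP => [_|/eqP i_neq0].
    by rewrite -(card1 (ord0 : 'I_n.+1)); apply: eq_card => k; rewrite !inE.
  have i_range : 0 < i < N by rewrite lt0n i_neq0 ltn_ord.
  rewrite -(@card_open_range n.+1 (pair_size t i)); first exact: eq_card.
  exact: leq_trans (osp_pair_le t_osp i_range) (leqnSn n).
rewrite (eq_bigr _ (fun i _ => card_range i)) /osp_weight.
case: N t t_osp {card_range} => [|N] t t_osp; first by rewrite big_ord0 big_geq.
rewrite big_ord_recl /= mul1n big_add1 /= big_mkord; apply: eq_bigr => i _.
by rewrite /pair_size /= subn1.
Qed.

Definition code_data (n : nat) (N : 'I_n.+1) : finType :=
  (N.-tuple {set 'I_n} * {ffun 'I_N -> 'I_n.+1})%type.

Definition code (n : nat) : finType := {N : 'I_n.+1 & code_data N}.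

Definition valid_data (n : nat) (N : 'I_n.+1) (c : code_data N) : bool :=
  ordered_set_partition c.1 && (c.2 \in family (gap_range c.1)).

Definition valid_code (n : nat) (c : code n) : bool := valid_data (tagged c).

Lemma card_valid_codes n : 0 < n -> #|[set c : code n | valid_code c]| = osp_sum n.
Proof.
move=> n_gt0; rewrite -sum1_card.
rewrite (eq_bigl (fun c : code n => true && valid_data (tagged c))); last first.
  by move=> c; rewrite inE.
rewrite -(sig_big_dep predT (fun N (c : code_data N) => valid_data c) (fun _ _ => 1)) /=.
have inner (N : 'I_n.+1) : \sum_(c : code_data N | valid_data c) 1 =
    \sum_(t : N.-tuple {set 'I_n} | ordered_set_partition t) osp_weight t.
  rewrite -(pair_big_dep (fun t => ordered_set_partition t)
                         (fun t g => g \in family (gap_range t)) (fun _ _ => 1)) /=.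
  by apply: eq_bigr => t t_osp; rewrite sum1_card card_gap_family.
rewrite (eq_bigr _ (fun N _ => inner N)) /osp_sum.
rewrite -(big_mkord predT (fun N => \sum_(t : N.-tuple {set 'I_n} | ordered_set_partition t)
  osp_weight t)) [in LHS]big_ltn // [X in X + _]big1 ?add0n // => t.
move=> /and3P [_ _ /eqP cover].
have : Ordinal n_gt0 \in \bigcup_(i < 0) tnth t i by rewrite cover inE.
by rewrite big_ord0 inE.
Qed.

Definition decode (n : nat) (c : code n) : 'I_n -> nat :=
  decode_stacks (tagged c).1 (tagged c).2.

Definition encode (n : nat) (f : 'I_n -> nat) : code n :=
  let N : 'I_n.+1 := inord (size (heights f)) in
  @Tagged _ N (@code_data n) (level_tuple f N, gap_tuple f N).

Section Codes.
Variable n : nat.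
Implicit Types (f : 'I_n -> nat) (c : code n).

Lemma inord_size_heights f : nat_of_ord (inord (size (heights f)) : 'I_n.+1) = size (heights f).
Proof. by rewrite inordK // ltnS (leq_trans (size_heights f)) ?card_ord. Qed.

Lemma valid_encode f : reverses (nat_config f) -> valid_code (encode f).
Proof.
move=> f_rev; rewrite /valid_code /valid_data /=.
rewrite inord_size_heights.
by rewrite level_tuple_osp gap_tuple_valid.
Qed.

Lemma decode_encode_stacks f : reverses (nat_config f) -> 0 \in heights f ->
  decode (encode f) = f.
Proof.
move=> f_rev f_zero; apply: functional_extensionality => v; rewrite /decode /=.
rewrite inord_size_heights.
exact: decode_encode.
Qed.

Lemma encode_decode c : valid_code c -> encode (decode c) = c.
Proof.
case: c => N [t g] /andP [t_osp g_valid]; rewrite /encode /decode /=.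
have -> : inord (size (heights (decode_stacks t g))) = N.
  by apply: val_inj; rewrite /= inordK size_heights_decode.
by rewrite level_tuple_decode // gap_tuple_decode.
Qed.

Lemma decode_valid_reverses c : valid_code c -> reverses (nat_config (decode c)).
Proof. by case/andP; exact: decode_reverses. Qed.

Lemma decode_valid_zero c : 0 < n -> valid_code c -> exists u, decode c u = 0.
Proof. by move=> n_gt0 /andP [t_osp g_valid]; exact: decode_zero. Qed.

End Codes.

Local Open Scope ring_scope.

Lemma equiv_attaining_zero (T : finType) (f g : T -> nat) :
  (exists u, f u = 0%N) -> (exists v, g v = 0%N) ->
  config_equiv (nat_config f) (nat_config g) -> f = g.
Proof.
move=> [u fu] [v gv] [c shift].
have c0 : c = 0.
  have := shift u; have := shift v; rewrite /nat_config fu gv.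
  have : 0 <= Posz (f v) by []. have : 0 <= Posz (g u) by [].
  rewrite -[Posz 0]/(0 : int); lra.
apply: functional_extensionality => w.
by have := shift w; rewrite c0 addr0 /nat_config => -[].
Qed.

Lemma normalize (T : finType) (D : config T) (v0 : T) : (forall v, D v0 <= D v) ->
  exists f : T -> nat, f v0 = 0%N /\ forall v, nat_config f v = D v - D v0.
Proof.
move=> D_min; exists (fun v => `|D v - D v0|%N); split; first by rewrite subrr.
by move=> v; rewrite /nat_config gez0_abs // subr_ge0.
Qed.

Local Close Scope ring_scope.

Theorem theorem5p1 (n : nat) : (1 <= n)%N ->
  exists f : 'I_(osp_sum n) -> config 'I_n,
    (forall i, pd_period (@complete_adj n) (f i)) /\
    (forall i j, config_equiv (f i) (f j) -> i = j) /\
    (forall D : config 'I_n, pd_period (@complete_adj n) D ->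
       exists i, config_equiv D (f i)).
Proof.
move=> n_gt0; have cardC := card_valid_codes n_gt0.
pose code_of (i : 'I_(osp_sum n)) : code n := enum_val (cast_ord (esym cardC) i).
have code_valid i : valid_code (code_of i).
  by have := enum_valP (cast_ord (esym cardC) i); rewrite inE.
exists (fun i => nat_config (decode (code_of i))); split; [|split].
- by move=> i; apply/reverses_period/decode_valid_reverses.
- move=> i j equiv_ij; apply: (cast_ord_inj (eq_n := esym cardC)); apply: enum_val_inj.
  rewrite -[enum_val _](encode_decode (code_valid i)) -[RHS](encode_decode (code_valid j)).
  by congr encode; apply: equiv_attaining_zero equiv_ij; exact: decode_valid_zero.
- move=> D /period_reverses D_rev.
  have [v0 _ D_min] := @extremumP int 'I_n (fun a b => (a <= b)%R) (Ordinal n_gt0) predT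
    D lexx le_trans le_total isT.
  have [f [f_v0 fE]] := normalize (fun v => D_min v isT).
  have f_rev : reverses (nat_config f).
    have -> : nat_config f = (fun v => D v + - D v0)%R by apply: functional_extensionality.
    exact: reverses_shift.
  have f_zero : 0 \in heights f by rewrite -f_v0 heights_mem.
  have C_f : encode f \in [set c : code n | valid_code c] by rewrite inE valid_encode.
  exists (cast_ord cardC (enum_rank_in C_f (encode f))), (- D v0)%R => v.
  by rewrite /code_of cast_ordK enum_rankK_in // decode_encode_stacks // fE.
Qed.
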